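(* Let $H=\{H_a\}_{a\in\alpha}$ be an $\alpha$-family of subgroups of $\pi$. If two nanowords over $\alpha$ are homotopic, then their $H$-coverings are homotopic.
   Context: Fix a set $\alpha$ with an involution $\tau$. An $\alpha$-alphabet is a set $\mathcal A$ with a map $A\mapsto|A|\in\alpha$. A nanoword over $\alpha$ is a pair $(\mathcal A,w)$ with $\mathcal A$ a finite $\alpha$-alphabet and $w$ a word in which each letter occurs exactly twice. Nanowords are isomorphic if a bijection of alphabets preserving $|\cdot|$ carries one word letterwise to the other. Homotopy moves ($x,y,z,t$ words in the remaining letters; smaller alphabets carry the restricted projection): (1) $(\mathcal A,xAAy)\mapsto(\mathcal A\setminus\{A\},xy)$; (2) $(\mathcal A,xAByBAz)\mapsto(\mathcal A\setminus\{A,B\},xyz)$ if $|B|=\tau(|A|)$; (3) $(\mathcal A,xAByACzBCt)\mapsto(\mathcal A,xBAyCAzCBt)$ if $A,B,C$ distinct with $|A|=|B|=|C|$. Homotopy is generated by isomorphisms, these moves and their inverses. Let $\pi$ be the multiplicative abelian group generated by the elements of $\alpha$ with relations $a\,\tau(a)=1$. For $A,B\in\mathcal A$ let $n_w(A,B)=1$ if $w=\cdots A\cdots B\cdots A\cdots B\cdots$, $-1$ if $w=\cdots B\cdots A\cdots B\cdots A\cdots$, and $0$ otherwise, and $[A]_w=\prod_{B\in\mathcal A}|B|^{n_w(A,B)}\in\pi$. An $\alpha$-family of subgroups of $\pi$ is a family $\{H_a\subset\pi\}_{a\in\alpha}$ of subgroups with $H_a=H_{\tau(a)}$ for all $a$.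 The $H$-covering of $(\mathcal A,w)$ is the nanoword $(\mathcal A^H,w^H)$ obtained by deleting from both $\mathcal A$ and $w$ all letters $A$ with $[A]_w\notin H_{|A|}$. *)

From HB Require Import structures.
From mathcomp Require Import all_boot all_order all_algebra.
From mathcomp Require Import generic_quotient.
From mathcomp Require Import freeg.
From Stdlib Require Import ClassicalEpsilon Relation_Operators.

Set Implicit Arguments.
Unset Strict Implicit.
Unset Printing Implicit Defensive.

Import Order.TTheory GRing.Theory Num.Theory.
Local Open Scope ring_scope.
Local Open Scope quotient_scope.

Definition pb (P : Prop) : bool :=
  if excluded_middle_informative P then true else false.

Lemma pbP (P : Prop) : reflect P (pb P).
Proof. by rewrite /pb; case: excluded_middle_informative => h; constructor. Qed.

(* The group pi = < alpha | a tau(a) = 1 > (abelian), written          *)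
(* additively: the free abelian group F = {freeg alpha} on alpha,      *)
(* modulo the subgroup N generated by the elements <<a>> + <<tau a>>.  *)
Section Pi.
Variables (alpha : choiceType) (tau : alpha -> alpha).

Definition FA := {freeg alpha / int}.

Definition relgen (a : alpha) : FA := << a >> + << tau a >>.

Definition inN (x : FA) : Prop :=
  exists s t : seq alpha,
    x = \sum_(a <- s) relgen a - \sum_(a <- t) relgen a.

Definition pirel (x y : FA) : bool := pb (inN (x - y)).

Lemma pirel_refl : reflexive pirel.
Proof.
move=> x; apply/pbP; exists [::], [::].
by rewrite subrr !big_nil subrr.
Qed.

Lemma pirel_sym : symmetric pirel.
Proof.
suff H : forall x y, pirel x y -> pirel y x.
  by move=> x y; apply/idP/idP; apply: H.
move=> x y /pbP [s [t e]]; apply/pbP; exists t, s.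
by rewrite -opprB e opprB.
Qed.

Lemma pirel_trans : transitive pirel.
Proof.
move=> y x z /pbP [s1 [t1 e1]] /pbP [s2 [t2 e2]]; apply/pbP.
exists (s1 ++ s2), (t1 ++ t2).
have -> : x - z = (x - y) + (y - z) by rewrite addrA subrK.
by rewrite e1 e2 !big_cat /= opprD addrACA.
Qed.

Canonical pirel_equiv := EquivRel pirel pirel_refl pirel_sym pirel_trans.

Definition pigrp := {eq_quot pirel}.

Definition to_pi (x : FA) : pigrp := \pi_pigrp x.
Definition pi_one : pigrp := to_pi 0.
Definition pi_mul (u v : pigrp) : pigrp := to_pi (repr u + repr v).
Definition pi_inv (u : pigrp) : pigrp := to_pi (- repr u).

Definition gen (a : alpha) : pigrp := to_pi << a >>.

Definition is_subgroup (H : pred pigrp) : Prop :=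
  [/\ pi_one \in H,
      forall u v, u \in H -> v \in H -> pi_mul u v \in H &
      forall u, u \in H -> pi_inv u \in H].

Definition alpha_family (H : alpha -> pred pigrp) : Prop :=
  (forall a, is_subgroup (H a)) /\ (forall a, H a = H (tau a)).

End Pi.

(* Nanowords.  Letters are natural numbers; a nanoword is a word       *)
(* w : seq nat together with a projection p : nat -> alpha; its        *)
(* alphabet is the (finite) set of letters occurring in w, on which    *)
(* p restricts to the map A |-> |A|.  Every finite alpha-alphabet is   *)
(* isomorphic to one of this form.                                      *)
Section Nanowords.
Variables (alpha : choiceType) (tau : alpha -> alpha).

Record nanoword := Nanoword { nw_word : seq nat; nw_proj : nat -> alpha }.

Definition is_nanoword (u : nanoword) : bool :=
  all (fun A => count_mem A (nw_word u) == 2%N) (nw_word u).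

Definition nw_iso (u v : nanoword) : Prop :=
  exists f : nat -> nat,
    [/\ {in nw_word u &, injective f},
        map f (nw_word u) = nw_word v &
        {in nw_word u, forall A, nw_proj v (f A) = nw_proj u A}].

Definition move1 (u v : nanoword) : Prop :=
  nw_proj v = nw_proj u /\
  exists (x y : seq nat) (A : nat),
    nw_word u = x ++ [:: A; A] ++ y /\ nw_word v = x ++ y.

Definition move2 (u v : nanoword) : Prop :=
  nw_proj v = nw_proj u /\
  exists (x y z : seq nat) (A B : nat),
    [/\ nw_word u = x ++ [:: A; B] ++ y ++ [:: B; A] ++ z,
        nw_word v = x ++ y ++ z &
        nw_proj u B = tau (nw_proj u A)].

Definition move3 (u v : nanoword) : Prop :=
  nw_proj v = nw_proj u /\
  exists (x y z t : seq nat) (A B C : nat),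
    [/\ nw_word u = x ++ [:: A; B] ++ y ++ [:: A; C] ++ z ++ [:: B; C] ++ t,
        nw_word v = x ++ [:: B; A] ++ y ++ [:: C; A] ++ z ++ [:: C; B] ++ t,
        [/\ A != B, A != C & B != C] &
        nw_proj u A = nw_proj u B /\ nw_proj u B = nw_proj u C].

Definition nw_step (u v : nanoword) : Prop :=
  [/\ is_nanoword u, is_nanoword v &
      [\/ nw_iso u v, move1 u v, move2 u v | move3 u v]].

Definition homotopic : nanoword -> nanoword -> Prop :=
  clos_refl_sym_trans nanoword nw_step.

Definition nw_n (w : seq nat) (A B : nat) : int :=
  if subseq [:: A; B; A; B] w then 1
  else if subseq [:: B; A; B; A] w then -1 else 0.

Definition letter_class (u : nanoword) (A : nat) : pigrp tau :=
  to_pi tau (\sum_(B <- undup (nw_word u)) << nw_n (nw_word u) A B *g nw_proj u B >>).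

Definition covering (H : alpha -> pred (pigrp tau)) (u : nanoword) : nanoword :=
  Nanoword
    (filter (fun A => letter_class u A \in H (nw_proj u A)) (nw_word u))
    (nw_proj u).

End Nanowords.

(* A homotopy move changes the class [X] of a surviving letter only by relators a tau(a):
   n_w(X, Y) depends only on the restriction of w to {X, Y}, and the pairs whose
   restriction changes either cancel or contribute relators.  Hence the covering commutes
   with the move as soon as the letters involved in it are kept or deleted together, and
   they are: in move (1), [A] = 1; in move (2), [A] = [B] and H_|A| = H_|B|; in move (3),
   [B] = [A][C] with all three in the subgroup H_|A|, so either all of A, B, C are kept or
   at most one of them is, and then the move does not change the covering. *)

From Pilot Require Import Defs.
From mathcomp Require Import all_boot all_order all_algebra generic_quotient freeg.
From mathcomp Require Import zify.
From Stdlib Require Import Relation_Operators.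

Set Implicit Arguments.
Unset Strict Implicit.
Unset Printing Implicit Defensive.

Import Order.TTheory GRing.Theory Num.Theory.
Local Open Scope ring_scope.

Definition restrict2 (X Y : nat) (w : seq nat) : seq nat :=
  [seq Z <- w | Z \in [:: X; Y]].

Definition chord (a b c X Y : nat) : seq nat :=
  nseq a Y ++ X :: nseq b Y ++ X :: nseq c Y.

Definition chord_link (b c : nat) : int :=
  if b == 1%N then (if c == 1%N then 1 else -1) else 0.

Lemma restrict2_cat X Y s1 s2 :
  restrict2 X Y (s1 ++ s2) = restrict2 X Y s1 ++ restrict2 X Y s2.
Proof. exact: filter_cat. Qed.

Lemma restrict2C X Y w : restrict2 X Y w = restrict2 Y X w.
Proof. by apply: eq_filter => Z; rewrite !inE orbC. Qed.

Lemma restrict2_filter (P : pred nat) X Y w : P X -> P Y ->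
  restrict2 X Y (filter P w) = restrict2 X Y w.
Proof.
move=> PX PY; rewrite /restrict2 -filter_predI; apply: eq_filter => Z /=.
by rewrite !inE; case: eqP => [->|_]; [rewrite PX|case: eqP => [->|]]; rewrite ?andbF.
Qed.

Lemma restrict2_out X Y s : X \notin s -> restrict2 X Y s = nseq (count_mem Y s) Y.
Proof.
move=> Xs; rewrite /restrict2 -size_filter.
have -> : [seq Z <- s | Z \in [:: X; Y]] = [seq Z <- s | Z == Y].
  apply: eq_in_filter => Z Zs; rewrite !inE.
  by case: eqP => // eZ; move: Xs; rewrite -eZ Zs.
by apply/all_pred1P; apply/allP => Z; rewrite mem_filter => /andP [].
Qed.

Lemma restrict2_swap X Y a b : a != b -> a != X -> b != X ->
  restrict2 X Y [:: a; b] = restrict2 X Y [:: b; a].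
Proof.
move=> nab /negbTE naX /negbTE nbX; rewrite /restrict2 /= !inE naX nbX /=.
by case: (eqVneq a Y) => [eaY|//]; case: (eqVneq b Y) => [ebY|//]; rewrite eaY ebY eqxx in nab.
Qed.

Lemma nw_n_restrict2 w X Y : nw_n w X Y = nw_n (restrict2 X Y w) X Y.
Proof. by rewrite /nw_n /restrict2 !subseq_filter /= !inE !eqxx /= !orbT. Qed.

Lemma nw_n_filter (P : pred nat) w X Y : P X -> P Y ->
  nw_n (filter P w) X Y = nw_n w X Y.
Proof. by move=> PX PY; rewrite nw_n_restrict2 restrict2_filter // -nw_n_restrict2. Qed.

Lemma nw_n_notin w X Y : Y \notin w -> nw_n w X Y = 0.
Proof.
move=> Yw; rewrite /nw_n.
have notsub s : Y \in s -> subseq s w = false.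
  by move=> Ys; apply/negP => /mem_subseq /(_ Y Ys); apply/negP.
by rewrite !notsub // !inE eqxx ?orbT.
Qed.

Lemma subseq_map_in (T1 T2 : eqType) (f : T1 -> T2) s w :
  {in w &, injective f} -> {subset s <= w} ->
  subseq (map f s) (map f w) = subseq s w.
Proof.
move=> f_inj sub_sw; apply/idP/idP => [|/(map_subseq f)] //.
case/subseqP => m _; rewrite -map_mask => /(inj_in_map f_inj) -> //; first exact: mask_subseq.
- exact/allP.
- by apply/allP => Z; apply: (mem_subseq (mask_subseq m w)).
Qed.

Lemma nw_n_map_in (f : nat -> nat) w X Y : {in w &, injective f} -> X \in w -> Y \in w ->
  nw_n (map f w) (f X) (f Y) = nw_n w X Y.
Proof.
move=> f_inj Xw Yw; have sub_w s : all [in w] s -> {subset s <= w} by move/allP.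
by rewrite /nw_n -!(subseq_map_in f_inj) //; apply: sub_w; rewrite /= Xw Yw.
Qed.

Lemma nw_n_diag w X : count_mem X w = 2%N -> nw_n w X X = 0.
Proof.
move=> cX; rewrite /nw_n.
suff -> : subseq [:: X; X; X; X] w = false by [].
by apply/negP => /(leq_count_subseq (pred1 X)); rewrite cX /= eqxx.
Qed.

Lemma nw_n_chord w X Y a b c : X != Y -> count_mem Y w = 2%N ->
  restrict2 X Y w = chord a b c X Y ->
  nw_n w X Y = chord_link b c /\ nw_n w Y X = - chord_link b c.
Proof.
move=> /negbTE nXY cY ew.
have : count_mem Y (restrict2 X Y w) = 2%N.
  by rewrite count_filter -cY; apply: eq_count => Z /=; case: eqP => // ->; rewrite !inE eqxx orbT.
rewrite nw_n_restrict2 [nw_n w Y X]nw_n_restrict2 [restrict2 Y X w]restrict2C ew {ew cY w}.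
rewrite !count_cat /= !count_nseq /= eqxx nXY mul1n add0n.
have nYX : (Y == X) = false by rewrite eq_sym.
move: a b c => [|[|[|a]]] [|[|[|b]]] [|[|[|c]]] //=;
  rewrite /nw_n /chord_link; do ?rewrite /= ?nXY ?nYX ?eqxx; by rewrite ?oppr0 ?opprK.
Qed.

Lemma chord_link_split kx ky kz kt : (kx + ky + kz + kt = 2)%N ->
  chord_link (ky + kz) kt = chord_link ky (kz + kt) + chord_link kz kt.
Proof. by case: kx ky kz kt => [|[|[|?]]] [|[|[|?]]] [|[|[|?]]] [|[|[|?]]]. Qed.

Lemma filter_mem_nil (T : eqType) (s l : seq T) : {in l, forall X, X \notin s} ->
  [seq Z <- s | Z \in l] = [::].
Proof.
move=> ls; apply/eqP; rewrite -[_ == _]negbK -has_filter; apply/hasPn => Z Zs.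
by apply: contraL Zs => /ls.
Qed.

Lemma restrict2_nil X Y s : X \notin s -> Y \notin s -> restrict2 X Y s = [::].
Proof. by move=> Xs Ys; apply: filter_mem_nil => Z; rewrite !inE => /orP [] /eqP ->. Qed.

Section Pi.
Variables (alpha : choiceType) (tau : alpha -> alpha).

Lemma inN0 : inN tau 0.
Proof. by exists [::], [::]; rewrite !big_nil subrr. Qed.

Lemma inND x y : inN tau x -> inN tau y -> inN tau (x + y).
Proof.
move=> [s1 [t1 ->]] [s2 [t2 ->]]; exists (s1 ++ s2), (t1 ++ t2).
by rewrite !big_cat /= opprD addrACA.
Qed.

Lemma inNN x : inN tau x -> inN tau (- x).
Proof. by move=> [s [t ->]]; exists t, s; rewrite opprB. Qed.

Lemma inNMz x k : inN tau x -> inN tau (x *~ k).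
Proof.
have inNMn n : inN tau x -> inN tau (x *+ n).
  move=> Nx; elim: n => [|n IH]; first by rewrite mulr0n; apply: inN0.
  by rewrite mulrS; apply: inND.
by case: k => n Nx; rewrite ?NegzE ?mulrNz; [|apply: inNN]; apply: inNMn.
Qed.

Lemma inN_relator (k : int) a : inN tau (<< k *g a >> + << k *g tau a >>).
Proof.
rewrite -[k]intz -!freegU_mulz -mulrzDl; apply: inNMz.
by exists [:: a], [::]; rewrite big_seq1 big_nil subr0.
Qed.

Lemma to_pi_eqP x y : to_pi tau x = to_pi tau y <-> inN tau (x - y).
Proof. by split=> [/eqquotP/pbP | /pbP Nxy]; last exact/eqquotP. Qed.

Lemma inN_repr_to_pi x : inN tau (repr (to_pi tau x) - x).
Proof. by apply/to_pi_eqP; rewrite /to_pi reprK. Qed.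

Lemma pi_mulE x y : Defs.pi_mul (to_pi tau x) (to_pi tau y) = to_pi tau (x + y).
Proof. by apply/to_pi_eqP; rewrite opprD addrACA; apply: inND; apply: inN_repr_to_pi. Qed.

Lemma pi_invE x : Defs.pi_inv (to_pi tau x) = to_pi tau (- x).
Proof. by apply/to_pi_eqP; rewrite -opprD; apply/inNN/inN_repr_to_pi. Qed.

Lemma subgroup_to_pi0 (G : pred (pigrp tau)) : is_subgroup G -> to_pi tau 0 \in G.
Proof. by case. Qed.

Lemma subgroup_to_piDl (G : pred (pigrp tau)) x y : is_subgroup G ->
  to_pi tau x \in G -> (to_pi tau (x + y) \in G) = (to_pi tau y \in G).
Proof.
move=> [_ Gmul Ginv] Gx; apply/idP/idP => [Gxy|Gy]; last by rewrite -pi_mulE Gmul.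
by rewrite -[y](addKr x) -pi_mulE Gmul // -pi_invE Ginv.
Qed.

Lemma subgroup_to_piD_cases (G : pred (pigrp tau)) x y : is_subgroup G ->
  [/\ to_pi tau x \in G, to_pi tau (x + y) \in G & to_pi tau y \in G] \/
  [/\ ~~ ((to_pi tau x \in G) && (to_pi tau (x + y) \in G)),
      ~~ ((to_pi tau x \in G) && (to_pi tau y \in G))
    & ~~ ((to_pi tau (x + y) \in G) && (to_pi tau y \in G))].
Proof.
move=> sG; have [Gx|nGx] := boolP (to_pi tau x \in G).
  by rewrite (subgroup_to_piDl y sG Gx); case: (boolP (to_pi tau y \in G)); [left|right].
right; split=> //; apply/negP => /andP [Gxy Gy].
by move: nGx; rewrite -(subgroup_to_piDl x sG Gy) addrC Gxy.
Qed.

End Pi.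

Definition classF (alpha : choiceType) (w : seq nat) (p : nat -> alpha) (X : nat) :
    FA alpha :=
  \sum_(B <- undup w) << nw_n w X B *g p B >>.

Lemma letter_classE (alpha : choiceType) (tau : alpha -> alpha) u X :
  letter_class tau u X = to_pi tau (classF (nw_word u) (nw_proj u) X).
Proof. by []. Qed.

Lemma big_undup_sub (T : eqType) (V : nmodType) (w l : seq T) (F : T -> V) :
  uniq l -> {subset l <= w} -> \sum_(E <- undup w | E \in l) F E = \sum_(E <- l) F E.
Proof.
move=> l_uniq sub_lw; rewrite -big_filter; apply/perm_big/uniq_perm.
- by rewrite filter_uniq ?undup_uniq.
- exact: l_uniq.
by move=> E; rewrite mem_filter mem_undup andb_idr // => /sub_lw.
Qed.

Section LetterClass.
Variables (alpha : choiceType) (p : nat -> alpha).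

Lemma classF_sub w s X : uniq s -> {subset w <= s} ->
  classF w p X = \sum_(B <- s) << nw_n w X B *g p B >>.
Proof.
move=> s_uniq sub_ws.
rewrite [RHS](bigID (mem w)) /= [X in _ + X]big1 ?addr0; last first.
  by move=> B Bw; rewrite nw_n_notin ?freegU0.
rewrite -big_filter; apply/perm_big/uniq_perm; rewrite ?undup_uniq ?filter_uniq //.
by move=> B; rewrite mem_undup mem_filter; case: (boolP (B \in w)) => // /sub_ws ->.
Qed.

Lemma classF_filter (P : pred nat) w X : P X ->
  classF w p X =
  classF (filter P w) p X + \sum_(B <- undup w | ~~ P B) << nw_n w X B *g p B >>.
Proof.
move=> PX; have sub_fw : {subset filter P w <= undup w}.
  by move=> B; rewrite mem_filter mem_undup => /andP [].
rewrite (classF_sub _ (undup_uniq w) sub_fw) /classF (bigID P) [in RHS](bigID P) /=.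
rewrite [X in _ = _ + X + _]big1 ?addr0.
  by congr (_ + _); apply: eq_bigr => B PB; rewrite nw_n_filter.
by move=> B /negbTE PB; rewrite nw_n_notin ?freegU0 // mem_filter PB.
Qed.

Lemma classF_delete w l X : uniq l -> {subset l <= w} -> X \notin l ->
  classF w p X =
  classF [seq E <- w | E \notin l] p X + \sum_(E <- l) << nw_n w X E *g p E >>.
Proof.
move=> l_uniq sub_lw Xl; rewrite (classF_filter (P := fun E => E \notin l)) //.
by rewrite -(big_undup_sub _ l_uniq sub_lw); congr (_ + _); apply: eq_bigl => E; rewrite negbK.
Qed.

Lemma classF_split w l a X : uniq l -> {subset l <= w} -> {in l, forall E, p E = a} ->
  classF w p X = << (\sum_(E <- l) nw_n w X E) *g a >> +
                 \sum_(E <- undup w | E \notin l) << nw_n w X E *g p E >>.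
Proof.
move=> l_uniq sub_lw pl; rewrite /classF (bigID (mem l)) /= big_undup_sub //.
rewrite (big_morph (fun k => << k *g a >>) (fun k1 k2 => esym (freegUD k1 k2 a)) (freegU0 _ a)).
by congr (_ + _); apply: eq_big_seq => E El; rewrite pl.
Qed.

End LetterClass.

Lemma classF_map (alpha : choiceType) (f : nat -> nat) w (p q : nat -> alpha) X :
  {in w &, injective f} -> {in w, forall A, q (f A) = p A} -> X \in w ->
  classF (map f w) q (f X) = classF w p X.
Proof.
move=> f_inj qf Xw; have fw_uniq : uniq (map f (undup w)).
  by rewrite map_inj_in_uniq ?undup_uniq // => a b; rewrite !mem_undup; apply: f_inj.
rewrite (classF_sub q _ fw_uniq); last by move=> _ /mapP [a aw ->]; rewrite map_f ?mem_undup.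
rewrite big_map; apply: eq_big_seq => B; rewrite mem_undup => Bw.
by rewrite nw_n_map_in // qf.
Qed.

Section FirstMove.
Variables (x y : seq nat) (A : nat).
Hypotheses (Ax : A \notin x) (Ay : A \notin y).

Let w := x ++ [:: A; A] ++ y.
Hypothesis w_count : {in w, forall D, count_mem D w = 2%N}.

Lemma move1_nw_n D : D \in w -> nw_n w A D = 0 /\ nw_n w D A = 0.
Proof.
move=> Dw; have [->|nAD] := eqVneq A D; first by rewrite nw_n_diag ?w_count.
have chordA : restrict2 A D w = chord (count_mem D x) 0 (count_mem D y) A D.
  by rewrite !restrict2_cat (restrict2_out D Ax) (restrict2_out D Ay) /restrict2 /= !inE eqxx.
by have [-> ->] := nw_n_chord nAD (w_count Dw) chordA; rewrite oppr0.
Qed.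

Variables (alpha : choiceType) (p : nat -> alpha).

Lemma move1_classF_A : classF w p A = 0.
Proof.
by apply: big1_seq => D; rewrite mem_undup => /andP [_ /move1_nw_n [-> _]]; rewrite freegU0.
Qed.

Lemma move1_classF D : D \in x ++ y -> classF w p D = classF (x ++ y) p D.
Proof.
move=> Dxy; have nAD : D \notin [:: A].
  by rewrite inE; apply: contraTneq Dxy => ->; rewrite mem_cat negb_or Ax Ay.
have Dw : D \in w by move: Dxy; rewrite !mem_cat => /orP [] ->; rewrite ?orbT.
have -> : x ++ y = [seq E <- w | E \notin [:: A]].
  rewrite !filter_cat /= inE eqxx /= -filter_cat; apply/esym/all_filterP/allP => E.
  by rewrite mem_cat inE; apply: contraTneq => ->; rewrite negb_or Ax Ay.
rewrite (classF_delete _ _ (l := [:: A])) //.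
  by rewrite big_seq1 (move1_nw_n Dw).2 freegU0 addr0.
by move=> E; rewrite inE => /eqP ->; rewrite !mem_cat !inE eqxx !orbT.
Qed.

End FirstMove.

Section SecondMove.
Variables (x y z : seq nat) (A B : nat).
Hypotheses (nAB : A != B) (Ax : A \notin x) (Ay : A \notin y) (Az : A \notin z).
Hypotheses (Bx : B \notin x) (By : B \notin y) (Bz : B \notin z).

Let w := x ++ [:: A; B] ++ y ++ [:: B; A] ++ z.
Hypothesis w_count : {in w, forall D, count_mem D w = 2%N}.

Lemma move2_nw_n D : D \in w -> D \notin [:: A; B] ->
  nw_n w A D = nw_n w B D /\ nw_n w D A = nw_n w D B.
Proof.
rewrite !inE negb_or => Dw /andP [nDA nDB].
have /negbTE nBA : B != A by rewrite eq_sym.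
have /negbTE nAD : A != D by rewrite eq_sym.
have /negbTE nBD : B != D by rewrite eq_sym.
have chordA : restrict2 A D w = chord (count_mem D x) (count_mem D y) (count_mem D z) A D.
  rewrite !restrict2_cat (restrict2_out D Ax) (restrict2_out D Ay) (restrict2_out D Az).
  by rewrite /restrict2 /= !inE eqxx nBA nBD.
have chordB : restrict2 B D w = chord (count_mem D x) (count_mem D y) (count_mem D z) B D.
  rewrite !restrict2_cat (restrict2_out D Bx) (restrict2_out D By) (restrict2_out D Bz).
  by rewrite /restrict2 /= !inE eqxx (negbTE nAB) nAD.
have [-> ->] := nw_n_chord (negbT nAD) (w_count Dw) chordA.
by have [-> ->] := nw_n_chord (negbT nBD) (w_count Dw) chordB.
Qed.

Variables (alpha : choiceType) (p : nat -> alpha).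

Lemma move2_classF_AB : classF w p A = classF w p B.
Proof.
have /negbTE nBA : B != A by rewrite eq_sym.
have Aw : A \in w by rewrite !mem_cat !inE eqxx !orbT.
have Bw : B \in w by rewrite !mem_cat !inE eqxx !orbT.
have chordAB : restrict2 A B w = chord 0 2 0 A B.
  rewrite !restrict2_cat (restrict2_nil Ax Bx) (restrict2_nil Ay By) (restrict2_nil Az Bz).
  by rewrite /restrict2 /= !inE !eqxx nBA.
have [linkAB linkBA] := nw_n_chord nAB (w_count Bw) chordAB.
apply: eq_big_seq => D; rewrite mem_undup => Dw; congr << _ *g _ >>.
have [->|nDA] := eqVneq D A; first by rewrite linkBA nw_n_diag ?(w_count Aw).
have [->|nDB] := eqVneq D B; first by rewrite linkAB nw_n_diag ?(w_count Bw).
by rewrite (move2_nw_n Dw _).1 // !inE negb_or nDA nDB.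
Qed.

Lemma move2_classF (tau : alpha -> alpha) D : p B = tau (p A) -> D \in x ++ y ++ z ->
  inN tau (classF w p D - classF (x ++ y ++ z) p D).
Proof.
move=> pB Dxyz; have nD : D \notin [:: A; B].
  rewrite !inE negb_or; apply/andP; split; apply: contraTneq Dxyz => ->;
    by rewrite !mem_cat !negb_or ?Ax ?Ay ?Az ?Bx ?By ?Bz.
have Dw : D \in w by move: Dxyz; rewrite !mem_cat => /or3P [] ->; rewrite ?orbT.
have -> : x ++ y ++ z = [seq E <- w | E \notin [:: A; B]].
  rewrite !filter_cat /= !inE !eqxx /= orbT -!filter_cat; apply/esym/all_filterP/allP => E Exyz.
  by rewrite !inE negb_or; apply/andP; split; apply: contraTneq Exyz => ->;
    rewrite !mem_cat !negb_or ?Ax ?Ay ?Az ?Bx ?By ?Bz.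
rewrite (classF_delete _ _ (l := [:: A; B])) //; first last.
- by move=> E; rewrite !inE => /orP [] /eqP ->; rewrite !mem_cat !inE eqxx !orbT.
- by rewrite /= inE nAB.
rewrite big_cons big_seq1 -(move2_nw_n Dw nD).2 pB addrAC subrr add0r.
exact: inN_relator.
Qed.

End SecondMove.

Section ThirdMove.
Variables (x y z t : seq nat) (A B C : nat).
Hypotheses (nAB : A != B) (nAC : A != C) (nBC : B != C).

Let w := x ++ [:: A; B] ++ y ++ [:: A; C] ++ z ++ [:: B; C] ++ t.
Let w' := x ++ [:: B; A] ++ y ++ [:: C; A] ++ z ++ [:: C; B] ++ t.
Let row s X := \sum_(E <- [:: A; B; C]) nw_n s X E.

Lemma move3_core_uniq : uniq [:: A; B; C].
Proof. by rewrite /= !inE negb_or nAB nAC nBC. Qed.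

Lemma move3_core_sub : {subset [:: A; B; C] <= w}.
Proof. by move=> E; rewrite !inE /w !mem_cat !inE => /or3P [] ->; rewrite ?orbT. Qed.

Lemma move3_core_out : {in [:: A; B; C], forall X, count_mem X w = 2%N} ->
  {in [:: A; B; C], forall X, [/\ X \notin x, X \notin y, X \notin z & X \notin t]}.
Proof.
have [hAB hAC hBC] := And3 (negbTE nAB) (negbTE nAC) (negbTE nBC).
have [hBA hCA hCB] : [/\ (B == A) = false, (C == A) = false & (C == B) = false].
  by rewrite !(eq_sym _ A) !(eq_sym C) hAB hAC hBC.
move=> w_count X X_core; move: (w_count X X_core); rewrite !count_cat /=.
(* The [/=] before [lia] turns [Equality.sort nat] into [nat], so that [lia] sees the
   counts in the goal and in the hypothesis as the same atoms. *)
move: X_core; rewrite !inE; case/or3P => /eqP ->; rewrite !eqxx ?hAB ?hBA ?hAC ?hCA ?hBC ?hCB /=;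
  by move=> cntX; split; apply/count_memPn; rewrite /=; lia.
Qed.

Hypothesis core_out :
  {in [:: A; B; C], forall X, [/\ X \notin x, X \notin y, X \notin z & X \notin t]}.

Lemma move3_perm : perm_eq w w'.
Proof.
have swap2 a b : perm_eq [:: a; b] [:: b; a] by rewrite (perm_catC [:: a]).
by rewrite !perm_cat2l; do 3 (apply: perm_cat => //; rewrite ?perm_cat2l).
Qed.

Lemma move3_nw_n_out D E : D \notin [:: A; B; C] ->
  nw_n w D E = nw_n w' D E /\ nw_n w E D = nw_n w' E D.
Proof.
rewrite !inE !negb_or => /and3P [nDA nDB nDC].
have [nAD nBD nCD] : [/\ A != D, B != D & C != D] by rewrite !(eq_sym _ D).
have rw : restrict2 D E w = restrict2 D E w'.
  by rewrite !restrict2_cat (restrict2_swap E nAB) ?(restrict2_swap E nAC) ?(restrict2_swap E nBC).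
rewrite nw_n_restrict2 [in RHS]nw_n_restrict2 rw; split=> //.
by rewrite nw_n_restrict2 [in RHS]nw_n_restrict2 restrict2C [restrict2 E D w']restrict2C rw.
Qed.

Lemma move3_core :
  [seq E <- w | E \in [:: A; B; C]] = [:: A; B; A; C; B; C] /\
  [seq E <- w' | E \in [:: A; B; C]] = [:: B; A; C; A; C; B].
Proof.
have [nx ny nz nt] : [/\ {in [:: A; B; C], forall X, X \notin x},
    {in [:: A; B; C], forall X, X \notin y}, {in [:: A; B; C], forall X, X \notin z}
    & {in [:: A; B; C], forall X, X \notin t}].
  by split=> X /core_out [].
rewrite !filter_cat (filter_mem_nil nx) (filter_mem_nil ny) (filter_mem_nil nz).
by rewrite (filter_mem_nil nt) /= !inE !eqxx !orbT.
Qed.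

Lemma move3_rows :
  [/\ row w A = 1, row w B = 0 & row w C = -1] /\ [/\ row w' A = 1, row w' B = 0 & row w' C = -1].
Proof.
have [coreA coreB coreC] : [/\ A \in [:: A; B; C], B \in [:: A; B; C] & C \in [:: A; B; C]].
  by rewrite !inE !eqxx ?orbT.
rewrite /row !big_cons !big_nil.
rewrite -!(@nw_n_filter (mem [:: A; B; C]) w) //; rewrite -!(@nw_n_filter (mem [:: A; B; C]) w') //.
have [-> ->] := move3_core.
have [/negbTE hAB /negbTE hAC /negbTE hBC] := And3 nAB nAC nBC.
have [hBA hCA hCB] : [/\ (B == A) = false, (C == A) = false & (C == B) = false].
  by rewrite ![_ == A]eq_sym ![C == _]eq_sym.
by rewrite /nw_n; do ?rewrite /= ?eqxx ?hAB ?hAC ?hBC ?hBA ?hCA ?hCB.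
Qed.

Lemma move3_nw_n_B D : D \notin [:: A; B; C] -> count_mem D w = 2%N ->
  nw_n w B D = nw_n w A D + nw_n w C D.
Proof.
rewrite !inE !negb_or => /and3P [nDA nDB nDC] cntD.
have [/negbTE hAD /negbTE hBD /negbTE hCD] : [/\ A != D, B != D & C != D].
  by rewrite !(eq_sym _ D).
have [hBA hCA hCB] : [/\ (B == A) = false, (C == A) = false & (C == B) = false].
  by rewrite !(eq_sym _ A) !(eq_sym C) (negbTE nAB) (negbTE nAC) (negbTE nBC).
have sum2 : (count_mem D x + count_mem D y + count_mem D z + count_mem D t = 2)%N.
  by move: cntD; rewrite /w !count_cat /= hAD hBD hCD /=; lia.
set kx := count_mem D x in sum2 *; set ky := count_mem D y in sum2 *.
set kz := count_mem D z in sum2 *; set kt := count_mem D t in sum2 *.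
have seg X : X \in [:: A; B; C] -> restrict2 X D w =
    nseq kx D ++ restrict2 X D [:: A; B] ++ nseq ky D ++ restrict2 X D [:: A; C] ++
    nseq kz D ++ restrict2 X D [:: B; C] ++ nseq kt D.
  move=> /core_out [Xx Xy Xz Xt]; rewrite !restrict2_cat (restrict2_out D Xx).
  by rewrite (restrict2_out D Xy) (restrict2_out D Xz) (restrict2_out D Xt).
have [coreA coreB coreC] : [/\ A \in [:: A; B; C], B \in [:: A; B; C] & C \in [:: A; B; C]].
  by rewrite !inE !eqxx ?orbT.
have chordA : restrict2 A D w = chord kx ky (kz + kt) A D.
  by rewrite (seg A coreA) /restrict2 /= !inE eqxx hBA hBD hCA hCD /= /chord nseqD.
have chordB : restrict2 B D w = chord kx (ky + kz) kt B D.
  rewrite (seg B coreB) /restrict2 /= !inE eqxx (negbTE nAB) hAD hCB hCD /=.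
  by rewrite /chord nseqD -catA.
have chordC : restrict2 C D w = chord (kx + ky) kz kt C D.
  rewrite (seg C coreC) /restrict2 /= !inE eqxx (negbTE nAC) hAD (negbTE nBC) hBD /=.
  by rewrite /chord nseqD -!catA.
have [-> _] := nw_n_chord (negbT hAD) cntD chordA.
have [-> _] := nw_n_chord (negbT hBD) cntD chordB.
have [-> _] := nw_n_chord (negbT hCD) cntD chordC.
exact: chord_link_split sum2.
Qed.

Variables (alpha : choiceType) (p : nat -> alpha) (a : alpha).
Hypothesis p_core : {in [:: A; B; C], forall E, p E = a}.
Hypothesis w_count : {in w, forall D, count_mem D w = 2%N}.

Lemma move3_classF X : classF w p X = classF w' p X.
Proof.
have core_w' : {subset [:: A; B; C] <= w'}.
  by move=> E /move3_core_sub; rewrite (perm_mem move3_perm).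
rewrite (classF_split X move3_core_uniq move3_core_sub p_core).
rewrite (classF_split X move3_core_uniq core_w' p_core).
congr (<< _ *g a >> + _).
  have [X_core|X_out] := boolP (X \in [:: A; B; C]).
    have [[rA rB rC] [rA' rB' rC']] := move3_rows.
    rewrite -/(row w X) -/(row w' X); move: X_core; rewrite !inE.
    by case/or3P => /eqP ->; rewrite ?rA ?rB ?rC ?rA' ?rB' ?rC'.
  by apply: eq_bigr => E _; rewrite (move3_nw_n_out E X_out).1.
rewrite (perm_big _ (perm_undup (perm_mem move3_perm))).
by apply: eq_bigr => E E_out; rewrite (move3_nw_n_out X E_out).2.
Qed.

Lemma move3_classF_B : classF w p B = classF w p A + classF w p C.
Proof.
rewrite !(classF_split _ move3_core_uniq move3_core_sub p_core) addrACA freegUD.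
have [[rA rB rC] _] := move3_rows.
congr (<< _ *g a >> + _); first by rewrite -/(row w A) -/(row w B) -/(row w C) rA rB rC.
rewrite -big_split [LHS]big_seq_cond [RHS]big_seq_cond; apply: eq_bigr => E /andP [Ew E_out].
by rewrite /= freegUD (move3_nw_n_B E_out (w_count _)) // -mem_undup.
Qed.

End ThirdMove.

Lemma nanoword_count (alpha : choiceType) (u : nanoword alpha) A :
  is_nanoword u -> A \in nw_word u -> count_mem A (nw_word u) = 2%N.
Proof. by move=> /allP nu /nu /eqP. Qed.

Lemma filter_swap (T : Type) (P : pred T) a b : ~~ (P a && P b) ->
  filter P [:: a; b] = filter P [:: b; a].
Proof. by rewrite /=; case: (P a); case: (P b). Qed.

Section Covering.
Variables (alpha : choiceType) (tau : alpha -> alpha) (H : alpha -> pred (pigrp tau)).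

Definition kept (u : nanoword alpha) (A : nat) : bool :=
  letter_class tau u A \in H (nw_proj u A).

Lemma covering_word u : nw_word (covering H u) = filter (kept u) (nw_word u).
Proof. by []. Qed.

Lemma covering_proj u : nw_proj (covering H u) = nw_proj u.
Proof. by []. Qed.

Lemma covering_eq u v : nw_proj v = nw_proj u ->
  filter (kept u) (nw_word u) = filter (kept v) (nw_word v) ->
  covering H u = covering H v.
Proof. by move=> pvu ew; rewrite /covering -/(kept u) -/(kept v) ew pvu. Qed.

Lemma is_nanoword_covering u : is_nanoword u -> is_nanoword (covering H u).
Proof.
move=> /allP nu; apply/allP => A; rewrite mem_filter => /andP [keptA Au].
rewrite count_filter -(eqP (nu A Au)); apply/eqP/eq_count => B /=.
by case: eqP => // ->.
Qed.

Lemma kept_eq u v X : nw_proj v = nw_proj u ->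
  inN tau (classF (nw_word u) (nw_proj u) X - classF (nw_word v) (nw_proj u) X) ->
  kept u X = kept v X.
Proof. by move=> pvu /to_pi_eqP; rewrite /kept !letter_classE pvu => ->. Qed.

Lemma covering_iso u v : nw_iso u v -> nw_iso (covering H u) (covering H v).
Proof.
case=> f [f_inj ev pv]; exists f; split.
- by move=> a b; rewrite !mem_filter => /andP [_ aw] /andP [_ bw]; apply: f_inj.
- rewrite !covering_word -ev filter_map; congr map; apply: eq_in_filter => a aw /=.
  by rewrite /kept !letter_classE -ev (classF_map (p := nw_proj u)) // (pv a aw).
- by move=> a; rewrite mem_filter => /andP [_ /pv].
Qed.

Hypothesis HH : alpha_family H.

Lemma covering_move1 u v : is_nanoword u -> move1 u v -> move1 (covering H u) (covering H v).
Proof.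
move=> /nanoword_count cnt2 [pvu [x [y [A [eu ev]]]]].
have := cnt2 A; rewrite eu !count_cat !mem_cat !inE eqxx /= orbT => /(_ isT) cntA.
have [Ax Ay] : A \notin x /\ A \notin y by split; apply/count_memPn; rewrite /=; lia.
rewrite eu in cnt2.
have keptA : kept u A.
  rewrite /kept letter_classE eu (move1_classF_A Ax Ay cnt2).
  exact: subgroup_to_pi0 (HH.1 _).
have kept_xy : {in x ++ y, kept u =1 kept v}.
  move=> D Dxy; apply: kept_eq => //; rewrite eu ev (move1_classF Ax Ay cnt2 _ Dxy) subrr.
  exact: inN0.
split; first by rewrite !covering_proj.
exists (filter (kept u) x), (filter (kept u) y), A; split.
- by rewrite covering_word eu !filter_cat /= keptA.
- by rewrite covering_word ev -filter_cat; apply/esym/eq_in_filter.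
Qed.

Lemma covering_move2 u v : is_nanoword u -> move2 tau u v ->
  move2 tau (covering H u) (covering H v) \/ covering H u = covering H v.
Proof.
move=> /nanoword_count cnt2 [pvu [x [y [z [A [B [eu ev pB]]]]]]].
have := cnt2 A; have := cnt2 B; rewrite eu !count_cat !mem_cat !inE !eqxx /= !orbT.
move=> /(_ isT) cntB /(_ isT) cntA.
have nAB : A != B by apply/eqP => eAB; move: cntA; rewrite eAB eqxx /=; lia.
have /negbTE nBA : B != A by rewrite eq_sym.
rewrite (negbTE nAB) nBA /= in cntA cntB.
have [Ax Ay Az] : [/\ A \notin x, A \notin y & A \notin z].
  by split; apply/count_memPn; rewrite /=; lia.
have [Bx By Bz] : [/\ B \notin x, B \notin y & B \notin z].
  by split; apply/count_memPn; rewrite /=; lia.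
rewrite eu in cnt2.
have keptAB : kept u A = kept u B.
  rewrite /kept !letter_classE eu (move2_classF_AB nAB Ax Ay Az Bx By Bz cnt2).
  by rewrite pB -(HH.2 (nw_proj u A)).
have kept_xyz : {in x ++ y ++ z, kept u =1 kept v}.
  move=> D Dxyz; apply: kept_eq => //; rewrite eu ev.
  exact: (move2_classF nAB Ax Ay Az Bx By Bz cnt2 pB Dxyz).
have [keptA|keptNA] := boolP (kept u A); [left|right].
- split; first by rewrite !covering_proj.
  exists (filter (kept u) x), (filter (kept u) y), (filter (kept u) z), A, B.
  split => //.
  + by rewrite covering_word eu !filter_cat /= -keptAB keptA.
  + by rewrite covering_word ev -!filter_cat; apply/esym/eq_in_filter.
- apply: covering_eq => //.
  rewrite eu ev !filter_cat /= -keptAB (negbTE keptNA) -!filter_cat.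
  exact: eq_in_filter.
Qed.

Lemma covering_move3 u v : is_nanoword u -> move3 u v ->
  move3 (covering H u) (covering H v) \/ covering H u = covering H v.
Proof.
move=> /nanoword_count cnt2 [pvu [x [y [z [t [A [B [C [eu ev [nAB nAC nBC] [pAB pBC]]]]]]]]]].
rewrite eu in cnt2.
have core_out := move3_core_out nAB nAC nBC
  (fun X X_core => cnt2 X (move3_core_sub _ _ _ _ X_core)).
have p_core : {in [:: A; B; C], forall E, nw_proj u E = nw_proj u A}.
  by move=> E; rewrite !inE => /or3P [] /eqP ->; rewrite ?pAB ?pBC.
have kept_uv : kept u =1 kept v.
  move=> X; apply: kept_eq => //; rewrite eu ev.
  by rewrite (move3_classF nAB nAC nBC core_out p_core) subrr; apply: inN0.
have keptE X : X \in [:: A; B; C] ->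
    kept u X = (to_pi tau (classF (nw_word u) (nw_proj u) X) \in H (nw_proj u A)).
  by move=> X_core; rewrite /kept letter_classE -(p_core X X_core).
have classF_B : classF (nw_word u) (nw_proj u) B =
    classF (nw_word u) (nw_proj u) A + classF (nw_word u) (nw_proj u) C.
  by rewrite eu; exact: (move3_classF_B nAB nAC nBC core_out p_core cnt2).
have [coreA coreB coreC] : [/\ A \in [:: A; B; C], B \in [:: A; B; C] & C \in [:: A; B; C]].
  by rewrite !inE !eqxx ?orbT.
have [[kA kB kC]|[nAB' nAC' nBC']] : [/\ kept u A, kept u B & kept u C] \/
    [/\ ~~ (kept u A && kept u B), ~~ (kept u A && kept u C) & ~~ (kept u B && kept u C)].
  by rewrite !keptE // classF_B; apply/subgroup_to_piD_cases/HH.1.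
- left; split; first by rewrite !covering_proj.
  exists (filter (kept u) x), (filter (kept u) y), (filter (kept u) z), (filter (kept u) t).
  exists A, B, C; split => //.
  + by rewrite covering_word eu !filter_cat /= kA kB kC.
  + by rewrite covering_word -(eq_filter kept_uv) ev !filter_cat /= kA kB kC.
- right; apply: covering_eq => //; rewrite -(eq_filter kept_uv) eu ev !filter_cat.
  by rewrite (filter_swap nAB') (filter_swap nAC') (filter_swap nBC').
Qed.

Lemma covering_step u v : nw_step tau u v -> homotopic tau (covering H u) (covering H v).
Proof.
case=> nu nv step.
suff [moved|->] : [\/ nw_iso (covering H u) (covering H v), move1 (covering H u) (covering H v),
                     move2 tau (covering H u) (covering H v) | move3 (covering H u) (covering H v)]
                  \/ covering H u = covering H v.
- by apply: rst_step; split; rewrite ?is_nanoword_covering.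
- exact: rst_refl.
case: step => [/covering_iso|/(covering_move1 nu)|/(covering_move2 nu)|/(covering_move3 nu)].
- by left; apply: Or41.
- by left; apply: Or42.
- by case=> [m|->]; [left; apply: Or43 | right].
- by case=> [m|->]; [left; apply: Or44 | right].
Qed.

End Covering.

Theorem lemma5p1 (alpha : choiceType) (tau : alpha -> alpha)
    (Htau : involutive tau) (H : alpha -> pred (pigrp tau))
    (HH : alpha_family H) (u v : nanoword alpha) :
  is_nanoword u -> is_nanoword v -> homotopic tau u v ->
  homotopic tau (covering H u) (covering H v).
Proof.
move=> _ _; elim=> [{}u {}v /(covering_step HH) //|{}u|{}u {}v _ IH|u1 u2 u3 _ IH12 _ IH23].
- exact: rst_refl.
- exact: rst_sym.
- exact: rst_trans IH12 IH23.
Qed.
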